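(* The category $\mathcal B$ is equivalent to the 2-groupoid $\mathcal K_G$ of $G=\mathbb Z$. The category $\mathcal B_n$ is equivalent to $\mathcal K_G$ for $G=\mathbb Z/n\mathbb Z$.
   Context: For a group $G$, the 2-groupoid $\mathcal K_G$ is the monoidal category whose objects are the elements of $G$, with monoidal product given by multiplication, and whose only morphisms are identity morphisms. $\mathcal B$ is the (non-linear) strict monoidal category whose objects are generated by two objects $\Omega^+,\Omega^-$ (drawn as upward and downward oriented strands), and whose morphisms are planar diagrams generated by the four oriented cups and caps (units/counits of adjunctions in both directions between $\Omega^+$ and $\Omega^-$), modulo the relations: the zigzag (isotopy) relations for these adjunctions; each closed oriented circle (of either orientation) equals the empty diagram; and the identity of $\Omega^+\otimes\Omega^-$ (and of $\Omega^-\otimes\Omega^+$) equals the composite of the appropriate cap followed by the appropriate cup. Only diagrams (not linear combinations) are morphisms. For $n\ge2$, $\mathcal B_n$ is obtained from $\mathcal B$ by adding two further generating morphisms, black $n$-valent vertices $\Omega^+\otimes\cdots\otimes\Omega^+\ (n\text{ factors})\to\mathbb 1$ and $\mathbb 1\to(\Omega^+)^{\otimes n}$, with relations: these vertices are cyclic and invariant under rotation (and similarly for the orientation-reversed versions); the composite of the two vertices in either order equals the identity (of $\mathbb 1$, respectively of $(\Omega^+)^{\otimes n}$). *)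

From HB Require Import structures.
From mathcomp Require Import all_boot all_order all_algebra.
Set Implicit Arguments. Unset Strict Implicit. Unset Printing Implicit Defensive.
Import GRing.Theory.
Local Open Scope ring_scope.

(* Objects: words in Omega^+ (P, upward) and Omega^- (M, downward);
   the monoidal product of objects is concatenation, the unit is [::]. *)
Inductive sgn := P | M.
Definition flip_sgn (s : sgn) : sgn := match s with P => M | M => P end.
Definition obj := seq sgn.

(* Cup s : 1 -> s (x) flip s,   Cap s : s (x) flip s -> 1   (the four oriented
   cups and caps);  VOut : (Omega^+)^n -> 1, VIn : 1 -> (Omega^+)^n
   (the black n-valent vertices, only available in B_n). *)
Inductive gen := Cup of sgn | Cap of sgn | VOut | VIn.

Inductive term :=
| Tid of obj
| Tgen of gen
| Tcomp of term & term          (* Tcomp f g = f o g (g first) *)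
| Ttens of term & term.

(* [v = None]  : the category B;  [v = Some n] : the category B_n. *)
Inductive typed (v : option nat) : term -> obj -> obj -> Prop :=
| ty_id a : typed v (Tid a) a a
| ty_cup s : typed v (Tgen (Cup s)) [::] [:: s; flip_sgn s]
| ty_cap s : typed v (Tgen (Cap s)) [:: s; flip_sgn s] [::]
| ty_vout n : v = Some n -> typed v (Tgen VOut) (nseq n P) [::]
| ty_vin n : v = Some n -> typed v (Tgen VIn) [::] (nseq n P)
| ty_comp f g a b c : typed v g a b -> typed v f b c -> typed v (Tcomp f g) a c
| ty_tens f g a b c d :
    typed v f a b -> typed v g c d -> typed v (Ttens f g) (a ++ c) (b ++ d).

(* Equality of morphisms: the congruence generated by the axioms of a strict
   monoidal category (planar isotopy) and the defining relations. *)
Inductive req (v : option nat) : term -> term -> Prop :=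
| rq_refl f : req v f f
| rq_sym f g : req v f g -> req v g f
| rq_trans f g h : req v f g -> req v g h -> req v f h
| rq_comp f f' g g' : req v f f' -> req v g g' -> req v (Tcomp f g) (Tcomp f' g')
| rq_tens f f' g g' : req v f f' -> req v g g' -> req v (Ttens f g) (Ttens f' g')
| rq_idl f a b : typed v f a b -> req v (Tcomp (Tid b) f) f
| rq_idr f a b : typed v f a b -> req v (Tcomp f (Tid a)) f
| rq_assoc f g h a b c d : typed v h a b -> typed v g b c -> typed v f c d ->
    req v (Tcomp (Tcomp f g) h) (Tcomp f (Tcomp g h))
| rq_tassoc f g h a b c d e k : typed v f a b -> typed v g c d -> typed v h e k ->
    req v (Ttens (Ttens f g) h) (Ttens f (Ttens g h))
| rq_tunitl f a b : typed v f a b -> req v (Ttens (Tid [::]) f) f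
| rq_tunitr f a b : typed v f a b -> req v (Ttens f (Tid [::])) f
| rq_tid a b : req v (Ttens (Tid a) (Tid b)) (Tid (a ++ b))
| rq_interchange f f' g g' a b c d e k :
    typed v f a b -> typed v f' b c -> typed v g d e -> typed v g' e k ->
    req v (Tcomp (Ttens f' g') (Ttens f g)) (Ttens (Tcomp f' f) (Tcomp g' g))
| rq_zig s :
    req v (Tcomp (Ttens (Tid [:: s]) (Tgen (Cap (flip_sgn s))))
                 (Ttens (Tgen (Cup s)) (Tid [:: s])))
          (Tid [:: s])
| rq_zag s :
    req v (Tcomp (Ttens (Tgen (Cap (flip_sgn s))) (Tid [:: flip_sgn s]))
                 (Ttens (Tid [:: flip_sgn s]) (Tgen (Cup s))))
          (Tid [:: flip_sgn s])
| rq_circle s : req v (Tcomp (Tgen (Cap s)) (Tgen (Cup s))) (Tid [::])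
| rq_idcapcup s : req v (Tcomp (Tgen (Cup s)) (Tgen (Cap s))) (Tid [:: s; flip_sgn s])
(* B_n: rotation invariance of the vertices *)
| rq_rot_out n : v = Some n ->
    req v (Tcomp (Tgen (Cap M))
             (Tcomp (Ttens (Ttens (Tid [:: M]) (Tgen VOut)) (Tid [:: P]))
                    (Ttens (Tgen (Cup M)) (Tid (nseq n P)))))
          (Tgen VOut)
| rq_rot_in n : v = Some n ->
    req v (Tcomp (Ttens (Tgen (Cap M)) (Tid (nseq n P)))
             (Tcomp (Ttens (Ttens (Tid [:: M]) (Tgen VIn)) (Tid [:: P]))
                    (Tgen (Cup M))))
          (Tgen VIn)
| rq_vv1 n : v = Some n -> req v (Tcomp (Tgen VOut) (Tgen VIn)) (Tid [::])
| rq_vv2 n : v = Some n -> req v (Tcomp (Tgen VIn) (Tgen VOut)) (Tid (nseq n P)).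

(* The presented monoidal category (B or B_n) is monoidally equivalent to K_G:
   there is a (strong, hence strict) monoidal functor F to K_G (objects of K_G
   are elements of G, product is the group law, only identity morphisms) that
   is faithful, full and essentially surjective. *)
Definition monoidal_equiv_K (v : option nat) (G : zmodType) : Prop :=
  exists F : obj -> G,
    F [::] = 0 /\
    (forall a b, F (a ++ b) = F a + F b) /\
    (forall f a b, typed v f a b -> F a = F b) /\
    (forall f g a b, typed v f a b -> typed v g a b -> req v f g) /\
    (forall a b, F a = F b -> exists f, typed v f a b) /\
    (forall x : G, exists a, F a = x).

From mathcomp Require Import all_boot all_order all_algebra zify.
From Stdlib Require Import Setoid Morphisms.
Set Implicit Arguments. Unset Strict Implicit. Unset Printing Implicit Defensive.
Import GRing.Theory.

(* An object has a degree in G (P counts 1, M counts -1), invariant along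
   diagrams.  Choose for every g in G a normal-form object [nf g] of degree g,
   together with isomorphisms [step x z : x :: nf z -> nf (sdeg x + z)].
   Iterating them gives isomorphisms [absorb a z : a ++ nf z -> nf (deg a + z)],
   and each generating diagram is compatible with them.  Hence every f : a -> b
   equals absorb b 0 ^-1 o absorb a 0: any two parallel diagrams are equal
   (faithful), and such a diagram exists as soon as a and b have the same
   degree (full).  For G = Z the normal forms are P^k and M^k, for Z/nZ they
   are P^k with k < n, the n-valent vertices accounting for P^n ~ 1. *)

#[global] Instance req_equiv v : Equivalence (req v).
Proof. split; [exact: rq_refl | exact: rq_sym | exact: rq_trans]. Qed.
#[global] Instance Tcomp_proper v : Proper (req v ==> req v ==> req v) Tcomp.
Proof. move=> ??????; exact: rq_comp. Qed.
#[global] Instance Ttens_proper v : Proper (req v ==> req v ==> req v) Ttens.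
Proof. move=> ??????; exact: rq_tens. Qed.

#[global] Hint Resolve rq_refl : core.

Definition well_typed v f := exists a b, typed v f a b.

Lemma typed_conv v f a b a' b' : typed v f a b -> a = a' -> b = b' -> typed v f a' b'.
Proof. by move=> H <- <-. Qed.
Lemma typed_tens_eq v f g a b c d x y : typed v f a b -> typed v g c d ->
  x = a ++ c -> y = b ++ d -> typed v (Ttens f g) x y.
Proof. by move=> Hf Hg -> ->; apply: ty_tens. Qed.
Lemma typed_id_eq v a x y : x = a -> y = a -> typed v (Tid a) x y.
Proof. by move=> -> ->; apply: ty_id. Qed.

Lemma typed_comp_inv v f g a c :
  typed v (Tcomp f g) a c -> exists b, typed v g a b /\ typed v f b c.
Proof. by move=> H; inversion H; subst; eauto. Qed.
Lemma typed_id_inv v a x y : typed v (Tid a) x y -> x = a /\ y = a.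
Proof. by move=> H; inversion H; subst. Qed.

Lemma nseq_cat_cons (T : Type) (x : T) n l : nseq n x ++ x :: l = x :: nseq n x ++ l.
Proof. by elim: n => //= n ->. Qed.

Ltac obj_eq :=
  solve [ done | by rewrite ?cats0 ?catA | by rewrite ?cats0 -?catA /= ?nseq_cat_cons ?cats0 ].

Create HintDb typed_db.
Ltac typecheck := lazymatch goal with
 | |- typed _ (Tid _) _ _ => first [apply: ty_id | apply: typed_id_eq; obj_eq]
 | |- typed _ (Tgen (Cup _)) _ _ => apply: ty_cup
 | |- typed _ (Tgen (Cap _)) _ _ => apply: ty_cap
 | |- typed _ (Tgen VOut) _ _ => first [eapply ty_vout; (eassumption || reflexivity)
      | eapply typed_conv; [eapply ty_vout; (eassumption || reflexivity) | obj_eq | obj_eq]]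
 | |- typed _ (Tgen VIn) _ _ => first [eapply ty_vin; (eassumption || reflexivity)
      | eapply typed_conv; [eapply ty_vin; (eassumption || reflexivity) | obj_eq | obj_eq]]
 | |- typed _ (Tcomp _ _) _ _ => eapply ty_comp; [typecheck | typecheck]
 | |- typed _ (Ttens _ _) _ _ => first [eapply ty_tens; [typecheck | typecheck]
      | eapply typed_tens_eq; [typecheck | typecheck | obj_eq | obj_eq]]
 | |- _ => first [eassumption | eauto with typed_db]
end.
Ltac discharge := try (solve [do 2 eexists; typecheck]); try reflexivity; try done.

(* The axioms of [req] carry typing premises; the lemmas below ask instead for
   a typing of the redex, which [discharge] finds. *)
Section StrictMonoidal.
Variable v : option nat.
Local Notation "f ≈ g" := (req v f g) (at level 70).
Local Notation wt := (well_typed v).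

Lemma comp_idl f b : wt (Tcomp (Tid b) f) -> Tcomp (Tid b) f ≈ f.
Proof. by move=> [x [y /typed_comp_inv [c [Hf /typed_id_inv [? ?]]]]]; subst; apply: rq_idl Hf. Qed.
Lemma comp_idr f a : wt (Tcomp f (Tid a)) -> Tcomp f (Tid a) ≈ f.
Proof. by move=> [x [y /typed_comp_inv [c [/typed_id_inv [? ?] Hf]]]]; subst; apply: rq_idr Hf. Qed.
Lemma compA f g h : wt (Tcomp (Tcomp f g) h) -> Tcomp f (Tcomp g h) ≈ Tcomp (Tcomp f g) h.
Proof.
move=> [x [y /typed_comp_inv [c [Hh /typed_comp_inv [d [Hg Hf]]]]]].
by symmetry; apply: rq_assoc Hh Hg Hf.
Qed.
Lemma tensA f g h : wt f -> wt g -> wt h -> Ttens f (Ttens g h) ≈ Ttens (Ttens f g) h.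
Proof. by move=> [a [b Hf]] [c [d Hg]] [e [k Hh]]; symmetry; apply: rq_tassoc Hf Hg Hh. Qed.
Lemma tens_idl f : wt f -> Ttens (Tid [::]) f ≈ f.
Proof. by move=> [a [b Hf]]; apply: rq_tunitl Hf. Qed.
Lemma tens_idr f : wt f -> Ttens f (Tid [::]) ≈ f.
Proof. by move=> [a [b Hf]]; apply: rq_tunitr Hf. Qed.
Lemma tens_id a b : Ttens (Tid a) (Tid b) ≈ Tid (a ++ b).
Proof. exact: rq_tid. Qed.
Lemma interchange f f' g g' : wt (Tcomp f' f) -> wt (Tcomp g' g) ->
  Tcomp (Ttens f' g') (Ttens f g) ≈ Ttens (Tcomp f' f) (Tcomp g' g).
Proof.
move=> [a [c /typed_comp_inv [b [Hf Hf']]]] [d [k /typed_comp_inv [e [Hg Hg']]]].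
exact: rq_interchange Hf Hf' Hg Hg'.
Qed.

Lemma comp_tens_idr f g w : wt (Tcomp f g) ->
  Tcomp (Ttens f (Tid w)) (Ttens g (Tid w)) ≈ Ttens (Tcomp f g) (Tid w).
Proof. by move=> Hfg; rewrite interchange; discharge; rewrite comp_idl; discharge. Qed.
Lemma comp_tens_idl f g w : wt (Tcomp f g) ->
  Tcomp (Ttens (Tid w) f) (Ttens (Tid w) g) ≈ Ttens (Tid w) (Tcomp f g).
Proof. by move=> Hfg; rewrite interchange; discharge; rewrite comp_idl; discharge. Qed.
Lemma tens_compl f g a b c d : typed v f a b -> typed v g c d ->
  Ttens f g ≈ Tcomp (Ttens f (Tid d)) (Ttens (Tid a) g).
Proof.
move=> Hf Hg; rewrite interchange; discharge.
by rewrite comp_idl; discharge; rewrite comp_idr; discharge.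
Qed.
Lemma tens_compr f g a b c d : typed v f a b -> typed v g c d ->
  Ttens f g ≈ Tcomp (Ttens (Tid b) g) (Ttens f (Tid c)).
Proof.
move=> Hf Hg; rewrite interchange; discharge.
by rewrite comp_idl; discharge; rewrite comp_idr; discharge.
Qed.

(* Precompose the left side with (cup s o cap s) (x) id = id and apply the
   zigzag relation. *)
Lemma cap_tens_swap s :
  Ttens (Tid [:: s]) (Tgen (Cap (flip_sgn s))) ≈ Ttens (Tgen (Cap s)) (Tid [:: s]).
Proof.
transitivity (Tcomp (Tcomp (Ttens (Tid [:: s]) (Tgen (Cap (flip_sgn s))))
                           (Ttens (Tgen (Cup s)) (Tid [:: s])))
                    (Ttens (Tgen (Cap s)) (Tid [:: s]))).
  rewrite -compA; last by case: s; discharge.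
  rewrite comp_tens_idr; last by case: s; discharge.
  by rewrite rq_idcapcup tens_id comp_idr //; case: s; discharge.
by rewrite rq_zig comp_idl //; case: s; discharge.
Qed.

(* Replace the vertex by its rotated form; the new cup and cap cancel by the
   zigzag relation. *)
Lemma vout_slide n : v = Some n ->
  Ttens (Tid [:: P]) (Tgen VOut) ≈ Ttens (Tgen VOut) (Tid [:: P]).
Proof.
move=> vn.
rewrite -{1}(rq_rot_out vn) -comp_tens_idl; discharge.
rewrite -comp_tens_idl; discharge.
rewrite (cap_tens_swap P) /=.
rewrite -[Ttens (Ttens (Tid [:: M]) _) _]tensA; discharge.
rewrite [Ttens (Tid [:: P]) (Ttens (Tid [:: M]) _)]tensA; discharge.
rewrite tens_id /= [Ttens (Tid [:: P]) (Ttens (Tgen (Cup M)) _)]tensA; discharge.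
rewrite compA; discharge.
rewrite interchange; discharge.
rewrite comp_idr; discharge. rewrite comp_idl; discharge.
have vout_P : typed v (Ttens (Tgen VOut) (Tid [:: P])) (nseq n P ++ [:: P]) [:: P].
  by typecheck.
rewrite (tens_compr (ty_cap v P) vout_P) tens_idl; discharge.
rewrite -compA; discharge.
rewrite (_ : nseq n P ++ [:: P] = [:: P] ++ nseq n P); last by rewrite nseq_cat_cons cats0.
rewrite -tens_id tensA; discharge.
rewrite comp_tens_idr; discharge.
by rewrite (rq_zag v M) tens_id comp_idr; discharge.
Qed.

Lemma vout_slide_nseq n k : v = Some n ->
  Ttens (Tid (nseq k P)) (Tgen VOut) ≈ Ttens (Tgen VOut) (Tid (nseq k P)).
Proof.
move=> vn; elim: k => [|k IH] /=.
  by rewrite tens_idl; discharge; rewrite tens_idr; discharge.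
rewrite -(tens_id [:: P] (nseq k P)) -tensA; discharge.
rewrite IH tensA; discharge.
rewrite (vout_slide vn) -tensA; discharge.
Qed.

End StrictMonoidal.

Section NormalForms.
Variables (v : option nat) (G : zmodType).
Variable sdeg : sgn -> G.
Variable nf : G -> obj.
Variables step unstep : sgn -> G -> term.
Local Open Scope ring_scope.
Local Notation "f ≈ g" := (req v f g) (at level 70).

Fixpoint act (a : obj) (z : G) : G := if a is x :: a' then sdeg x + act a' z else z.
Definition deg (a : obj) : G := act a 0.

Fixpoint absorb (a : obj) (z : G) : term :=
  if a is x :: a' then Tcomp (step x (act a' z)) (Ttens (Tid [:: x]) (absorb a' z))
  else Tid (nf z).
Fixpoint emit (a : obj) (z : G) : term :=
  if a is x :: a' then Tcomp (Ttens (Tid [:: x]) (emit a' z)) (unstep x (act a' z))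
  else Tid (nf z).

Hypothesis sdeg_flip : forall s, sdeg s + sdeg (flip_sgn s) = 0.
Hypothesis deg_vertex : forall n, v = Some n -> deg (nseq n P) = 0.
Hypothesis deg_nf : forall z, deg (nf z) = z.
Hypothesis nf0 : nf 0 = [::].
Hypothesis step_typed : forall x z, typed v (step x z) (x :: nf z) (nf (sdeg x + z)).
Hypothesis unstep_typed : forall x z, typed v (unstep x z) (nf (sdeg x + z)) (x :: nf z).
Hypothesis stepK : forall x z, Tcomp (unstep x z) (step x z) ≈ Tid (x :: nf z).
Hypothesis step_cap : forall s z,
  Tcomp (step s (sdeg (flip_sgn s) + z)) (Ttens (Tid [:: s]) (step (flip_sgn s) z))
  ≈ Ttens (Tgen (Cap s)) (Tid (nf z)).
Hypothesis absorb_vertex : forall n, v = Some n -> forall z,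
  absorb (nseq n P) z ≈ Ttens (Tgen VOut) (Tid (nf z)).

Lemma absorb_typed a z : typed v (absorb a z) (a ++ nf z) (nf (act a z)).
Proof. by elim: a => [|x a IH] /=; [apply: ty_id | typecheck]. Qed.
Lemma emit_typed a z : typed v (emit a z) (nf (act a z)) (a ++ nf z).
Proof. by elim: a => [|x a IH] /=; [apply: ty_id | typecheck]. Qed.
Local Hint Resolve step_typed unstep_typed absorb_typed emit_typed : typed_db.

Lemma act_cat a c z : act (a ++ c) z = act a (act c z).
Proof. by elim: a => //= x a ->. Qed.
Lemma act_deg a z : act a z = deg a + z.
Proof. by rewrite /deg; elim: a => [|x a IH] /=; [rewrite add0r | rewrite IH addrA]. Qed.
Lemma deg_cat a c : deg (a ++ c) = deg a + deg c.
Proof. by rewrite /deg act_cat act_deg. Qed.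

Lemma typed_deg f a b : typed v f a b -> deg a = deg b.
Proof.
elim=> [c|s|s|n vn|n vn|f1 g1 a1 b1 c1 _ IH1 _ IH2|f1 g1 a1 b1 c1 d1 _ IH1 _ IH2] //.
- by rewrite /deg /= addr0 sdeg_flip.
- by rewrite /deg /= addr0 sdeg_flip.
- by rewrite (deg_vertex vn).
- by rewrite (deg_vertex vn).
- by rewrite IH1.
- by rewrite !deg_cat IH1 IH2.
Qed.

Lemma absorb_cat a c z :
  absorb (a ++ c) z ≈ Tcomp (absorb a (act c z)) (Ttens (Tid a) (absorb c z)).
Proof.
elim: a => [|x a IH] /=.
  by rewrite tens_idl; discharge; rewrite comp_idl; discharge.
rewrite IH act_cat -comp_tens_idl; discharge.
rewrite compA; discharge.
rewrite -(tens_id _ [:: x] a) -tensA; discharge.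
Qed.

Lemma emit_absorb a z : Tcomp (emit a z) (absorb a z) ≈ Tid (a ++ nf z).
Proof.
elim: a => [|x a IH] /=; first by rewrite comp_idl; discharge.
rewrite -compA; discharge. rewrite [Tcomp (unstep _ _) _]compA; discharge.
rewrite stepK comp_idl; discharge.
by rewrite comp_tens_idl; discharge; rewrite IH tens_id.
Qed.

Lemma absorb_natural f a b : typed v f a b -> forall z,
  Tcomp (absorb b z) (Ttens f (Tid (nf z))) ≈ absorb a z.
Proof.
elim=> /=.
- by move=> c z; rewrite tens_id comp_idr; discharge.
- move=> s z; rewrite tens_id comp_idr; discharge.
  rewrite step_cap comp_tens_idr; discharge.
  by rewrite rq_circle tens_idl; discharge.
- move=> s z; rewrite comp_idl; discharge.
  by rewrite tens_id comp_idr; discharge; rewrite step_cap.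
- by move=> n vn z; rewrite comp_idl; discharge; rewrite absorb_vertex.
- move=> n vn z; rewrite absorb_vertex // comp_tens_idr; discharge.
  by rewrite (rq_vv1 vn) tens_idl; discharge.
- move=> f1 g1 a1 b1 c1 Hg IHg Hf IHf z.
  rewrite -comp_tens_idr; discharge.
  by rewrite compA; discharge; rewrite IHf IHg.
- move=> f1 g1 a1 b1 c1 d1 Hf IHf Hg IHg z.
  rewrite !absorb_cat -tensA; discharge.
  rewrite -compA; discharge.
  rewrite interchange; discharge.
  rewrite comp_idl; discharge.
  rewrite IHg (_ : act d1 z = act c1 z); last by rewrite !act_deg (typed_deg Hg).
  rewrite (tens_compl Hf (absorb_typed c1 z)) compA; discharge.
  by rewrite IHf.
Qed.

Lemma req_emit_absorb f a b : typed v f a b -> f ≈ Tcomp (emit b 0) (absorb a 0).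
Proof.
move=> Hf; rewrite -(absorb_natural Hf 0) compA; discharge.
rewrite emit_absorb comp_idl; discharge.
by rewrite nf0 tens_idr; discharge.
Qed.

Lemma normal_forms_equiv : monoidal_equiv_K v G.
Proof.
exists deg; split=> //; split; first exact: deg_cat.
split; first exact: typed_deg.
split.
  by move=> f g a b Hf Hg; rewrite (req_emit_absorb Hf) (req_emit_absorb Hg).
split; last by move=> z; exists (nf z).
move=> a b Eab; exists (Tcomp (emit b 0) (absorb a 0)).
have Hab : typed v (Tcomp (emit b 0) (absorb a 0)) (a ++ nf 0) (b ++ nf 0).
  by apply: ty_comp (absorb_typed a 0) _; rewrite [act a 0]Eab; apply: emit_typed.
by apply: typed_conv Hab _ _; rewrite nf0 cats0.
Qed.

End NormalForms.

Section IntegerNormalForms.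
Local Open Scope ring_scope.

Lemma add1z_Posz k : 1 + Posz k = Posz k.+1. Proof. lia. Qed.
Lemma add1z_NegzS k : 1 + Negz k.+1 = Negz k. Proof. rewrite !NegzE; lia. Qed.
Lemma add1z_Negz0 : 1 + Negz 0 = Posz 0. Proof. rewrite !NegzE; lia. Qed.
Lemma addN1z_Posz0 : -1 + Posz 0 = Negz 0. Proof. rewrite !NegzE; lia. Qed.
Lemma addN1z_PoszS k : -1 + Posz k.+1 = Posz k. Proof. lia. Qed.
Lemma addN1z_Negz k : -1 + Negz k = Negz k.+1. Proof. rewrite !NegzE; lia. Qed.
Definition addpm1zE :=
  (add1z_Posz, add1z_NegzS, add1z_Negz0, addN1z_Posz0, addN1z_PoszS, addN1z_Negz).

Definition sdegZ (s : sgn) : int := if s is P then 1 else -1.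
Definition nfZ (z : int) : obj :=
  match z with Posz k => nseq k P | Negz k => nseq k.+1 M end.
Definition stepZ (s : sgn) (z : int) : term :=
  match s, z with
  | P, Posz k => Tid (P :: nseq k P)
  | P, Negz k => Ttens (Tgen (Cap P)) (Tid (nseq k M))
  | M, Posz 0 => Tid [:: M]
  | M, Posz k.+1 => Ttens (Tgen (Cap M)) (Tid (nseq k P))
  | M, Negz k => Tid (M :: nseq k.+1 M)
  end.
Definition unstepZ (s : sgn) (z : int) : term :=
  match s, z with
  | P, Posz k => Tid (P :: nseq k P)
  | P, Negz k => Ttens (Tgen (Cup P)) (Tid (nseq k M))
  | M, Posz 0 => Tid [:: M]
  | M, Posz k.+1 => Ttens (Tgen (Cup M)) (Tid (nseq k P))
  | M, Negz k => Tid (M :: nseq k.+1 M)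
  end.

Lemma sdegZ_flip s : sdegZ s + sdegZ (flip_sgn s) = 0.
Proof. by case: s; rewrite /= ?subrr ?addNr. Qed.

Lemma degZ_nseqP k : deg sdegZ (nseq k P) = Posz k.
Proof. by rewrite /deg; elim: k => //= k ->; rewrite add1z_Posz. Qed.
Lemma degZ_nseqM k : deg sdegZ (nseq k.+1 M) = Negz k.
Proof.
rewrite /deg; elim: k => [|k IH]; first by rewrite /= addN1z_Posz0.
by change (-1 + act sdegZ (nseq k.+1 M) 0 = Negz k.+1); rewrite IH addN1z_Negz.
Qed.

Lemma degZ_nf z : deg sdegZ (nfZ z) = z.
Proof. by case: z => k; rewrite /= ?degZ_nseqP ?degZ_nseqM. Qed.

Lemma stepZ_typed x z : typed None (stepZ x z) (x :: nfZ z) (nfZ (sdegZ x + z)).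
Proof. by case: x; case: z => [[|k]|[|k]]; rewrite /sdegZ ?addpm1zE /=; typecheck. Qed.
Lemma unstepZ_typed x z : typed None (unstepZ x z) (nfZ (sdegZ x + z)) (x :: nfZ z).
Proof. by case: x; case: z => [[|k]|[|k]]; rewrite /sdegZ ?addpm1zE /=; typecheck. Qed.

Lemma stepZK x z : req None (Tcomp (unstepZ x z) (stepZ x z)) (Tid (x :: nfZ z)).
Proof.
case: x; case: z => [[|k]|[|k]]; rewrite /sdegZ ?addpm1zE /=;
  first [ by rewrite comp_idl; discharge
        | by rewrite comp_tens_idr; discharge; rewrite rq_idcapcup tens_id ].
Qed.

Lemma stepZ_cap s z :
  req None (Tcomp (stepZ s (sdegZ (flip_sgn s) + z)) (Ttens (Tid [:: s]) (stepZ (flip_sgn s) z)))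
    (Ttens (Tgen (Cap s)) (Tid (nfZ z))).
Proof.
have swapP := cap_tens_swap None P; have swapM := cap_tens_swap None M.
simpl in swapP, swapM.
case: s; case: z => [[|k]|[|k]]; rewrite /sdegZ ?addpm1zE /=;
  first [ by rewrite tens_id comp_idr; discharge
        | by rewrite comp_idl; discharge; rewrite tens_idr; discharge; rewrite swapM
        | by rewrite comp_idl; discharge; rewrite tensA; discharge;
             rewrite ?swapM ?swapP -tensA; discharge; rewrite tens_id ].
Qed.

Lemma B_equiv_KZ : monoidal_equiv_K None int.
Proof.
by apply: (normal_forms_equiv sdegZ_flip _ degZ_nf _
             stepZ_typed unstepZ_typed stepZK stepZ_cap).
Qed.

End IntegerNormalForms.

Section CyclicNormalForms.
Variable m : nat.
Local Notation N := m.+2.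
Local Notation v := (Some N).

Definition sdegN (s : sgn) : 'Z_N := if s is P then 1%R else (-1)%R.
Definition nfN (z : 'Z_N) : obj := nseq z P.
(* At [z = 0] a downward strand is absorbed by capping it with the first
   strand of a vertex P^N. *)
Definition stepN (s : sgn) (z : 'Z_N) : term :=
  match s, nat_of_ord z with
  | P, k => if k == m.+1 then Tgen VOut else Tid (P :: nseq k P)
  | M, k.+1 => Ttens (Tgen (Cap M)) (Tid (nseq k P))
  | M, 0 => Tcomp (Ttens (Tgen (Cap M)) (Tid (nseq m.+1 P))) (Ttens (Tid [:: M]) (Tgen VIn))
  end.
Definition unstepN (s : sgn) (z : 'Z_N) : term :=
  match s, nat_of_ord z with
  | P, k => if k == m.+1 then Tgen VIn else Tid (P :: nseq k P)
  | M, k.+1 => Ttens (Tgen (Cup M)) (Tid (nseq k P))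
  | M, 0 => Tcomp (Ttens (Tid [:: M]) (Tgen VOut)) (Ttens (Tgen (Cup M)) (Tid (nseq m.+1 P)))
  end.

Lemma Zp_add1_val (z : 'Z_N) : nat_of_ord (1 + z)%R = if (z : nat) == m.+1 then 0 else z.+1.
Proof.
rewrite add_1_Zp /=; case: z => k /= lt_k; case: eqP => [->|ne_k]; first by rewrite modnn.
by rewrite modn_small //; move: lt_k ne_k; rewrite /Zp_trunc /=; lia.
Qed.
Lemma Zp_addN1_val (z : 'Z_N) : nat_of_ord (-1 + z)%R = if (z : nat) is k.+1 then k else m.+1.
Proof.
rewrite add_N1_Zp /=; case: z => [[|k] lt_k] /=; first by rewrite modn_small.
by rewrite modnDr modn_small //; move: lt_k; rewrite /Zp_trunc /=; lia.
Qed.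

Lemma act_nseqP_val j (z : 'Z_N) : nat_of_ord (act sdegN (nseq j P) z) = (j + z) %% N.
Proof.
elim: j => [|j IH]; first by rewrite /= modn_small; last exact: ltn_ord.
change (nat_of_ord (1 + act sdegN (nseq j P) z)%R = (j.+1 + z) %% N).
by rewrite add_1_Zp /= IH -[(Zp_trunc N).+2]/N -addn1 modnDml addn1 addSn.
Qed.

Lemma sdegN_flip s : (sdegN s + sdegN (flip_sgn s) = 0)%R.
Proof. by case: s; rewrite /= ?subrr ?addNr. Qed.
Lemma degN_vertex n : v = Some n -> deg sdegN (nseq n P) = 0%R.
Proof. by case=> <-; apply: ord_inj; rewrite /deg act_nseqP_val /= addn0 modnn. Qed.
Lemma degN_nf z : deg sdegN (nfN z) = z.
Proof.
by apply: ord_inj; rewrite /deg /nfN act_nseqP_val /= addn0 modn_small; last exact: ltn_ord.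
Qed.

Lemma stepN_typed x z : typed v (stepN x z) (x :: nfN z) (nfN (sdegN x + z)%R).
Proof.
rewrite /nfN; case: x; rewrite /stepN /sdegN.
  by rewrite Zp_add1_val; case: eqP => [->|_] /=; typecheck.
by rewrite Zp_addN1_val; case: z => [[|k] lt_k] /=; typecheck.
Qed.
Lemma unstepN_typed x z : typed v (unstepN x z) (nfN (sdegN x + z)%R) (x :: nfN z).
Proof.
rewrite /nfN; case: x; rewrite /unstepN /sdegN.
  by rewrite Zp_add1_val; case: eqP => [->|_] /=; typecheck.
by rewrite Zp_addN1_val; case: z => [[|k] lt_k] /=; typecheck.
Qed.

Lemma stepNK x z : req v (Tcomp (unstepN x z) (stepN x z)) (Tid (x :: nfN z)).
Proof.
rewrite /nfN; case: x; rewrite /stepN /unstepN.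
  case: eqP => [->|_] /=; first by rewrite (rq_vv2 (n := N)).
  by rewrite comp_idl; discharge.
case: z => [[|k] lt_k] /=; last first.
  by rewrite comp_tens_idr; discharge; rewrite rq_idcapcup tens_id.
rewrite -compA; discharge. rewrite [Tcomp (Ttens (Tgen (Cup M)) _) _]compA; discharge.
rewrite comp_tens_idr; discharge. rewrite rq_idcapcup tens_id comp_idl; discharge.
by rewrite comp_tens_idl; discharge; rewrite (rq_vv1 (n := N)) // tens_id.
Qed.

Lemma stepN_cap s z :
  req v (Tcomp (stepN s (sdegN (flip_sgn s) + z)%R) (Ttens (Tid [:: s]) (stepN (flip_sgn s) z)))
    (Ttens (Tgen (Cap s)) (Tid (nfN z))).
Proof.
have swapP := cap_tens_swap v P; simpl in swapP.
rewrite /nfN; case: s; rewrite /stepN /sdegN /flip_sgn.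
  rewrite Zp_addN1_val; case: z => [[|k] lt_k] /=.
    rewrite eqxx -comp_tens_idl; discharge.
    rewrite [Ttens (Tid [:: P]) (Ttens (Tgen (Cap M)) _)]tensA; discharge.
    rewrite swapP -tensA; discharge.
    rewrite [Ttens (Tid [:: P]) (Ttens (Tid [:: M]) _)]tensA; discharge.
    rewrite !tens_id interchange; discharge.
    rewrite comp_idr; discharge. rewrite comp_idl; discharge.
    rewrite (tens_compr (ty_cap v P) (@ty_vin v N erefl)) tens_idl; discharge.
    by rewrite compA; discharge; rewrite (rq_vv1 (n := N)) // comp_idl; discharge.
  rewrite ifN; last by apply/eqP; move: lt_k; rewrite /Zp_trunc /=; lia.
  rewrite comp_idl; discharge. rewrite tensA; discharge.
  by rewrite swapP -tensA; discharge; rewrite tens_id.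
rewrite Zp_add1_val; case: eqP => [->|_] /=.
  rewrite -compA; discharge. rewrite comp_tens_idl; discharge.
  by rewrite (rq_vv2 (n := N)) // tens_id comp_idr; discharge.
by rewrite tens_id comp_idr; discharge.
Qed.

Lemma absorbN_nseqP_small j (z : 'Z_N) : j + z < N ->
  req v (absorb sdegN nfN stepN (nseq j P) z) (Tid (nseq j P ++ nseq z P)).
Proof.
elim: j => [|j IH] lt_jz //=.
rewrite IH; last lia.
rewrite act_nseqP_val modn_small; last lia.
rewrite ifN; last by apply/eqP; lia.
by rewrite nseqD tens_id comp_idl; discharge.
Qed.

Lemma absorbN_nseqP_wrap j (z : 'Z_N) : N <= j + z -> j <= N ->
  req v (absorb sdegN nfN stepN (nseq j P) z) (Ttens (Tid (nseq (j + z - N) P)) (Tgen VOut)).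
Proof.
have lt_z : z < N := ltn_ord z.
elim: j => [|j IH] ge_jz le_j /=; first lia.
case: (ltnP (j + z) N) => lt_jz.
  rewrite absorbN_nseqP_small // act_nseqP_val modn_small // ifT; last by apply/eqP; lia.
  rewrite (_ : j.+1 + z - N = 0); last lia.
  rewrite /= tens_id -nseqD (_ : j + z = m.+1); last lia.
  by rewrite comp_idr; discharge; rewrite tens_idl; discharge.
have mod_jz : (j + z) %% N = j + z - N.
  by rewrite -{1}(subnK lt_jz) modnDr modn_small //; lia.
rewrite IH; try lia.
rewrite act_nseqP_val mod_jz ifN; last by apply/eqP; lia.
rewrite (_ : j.+1 + z - N = (j + z - N).+1); last lia.
by rewrite tensA; discharge; rewrite tens_id comp_idl; discharge.
Qed.

Lemma absorbN_vertex n : v = Some n -> forall z,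
  req v (absorb sdegN nfN stepN (nseq n P) z) (Ttens (Tgen VOut) (Tid (nfN z))).
Proof.
case=> <- z; have lt_z : z < N := ltn_ord z.
rewrite absorbN_nseqP_wrap; try lia.
by rewrite (_ : N + z - N = z); [rewrite (vout_slide_nseq z (erefl v)) | lia].
Qed.

Lemma B_n_equiv_KZn : monoidal_equiv_K v 'Z_N.
Proof.
exact: (normal_forms_equiv sdegN_flip degN_vertex degN_nf (erefl _)
          stepN_typed unstepN_typed stepNK stepN_cap absorbN_vertex).
Qed.

End CyclicNormalForms.

Theorem theoremB1 :
  monoidal_equiv_K None int /\
  (forall n : nat, (2 <= n)%N -> monoidal_equiv_K (Some n) 'Z_n).
Proof.
split; first exact: B_equiv_KZ.
by case=> [|[|m]] // _; apply: B_n_equiv_KZn.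
Qed.
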